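(* Let $\Phi:\mathbb R^d\to\mathbb R$ have a unique minimizer $\theta^*$ and be twice continuously differentiable near $\theta^*$ with positive definite Hessian $\nabla^2\Phi(\theta^* )$ having eigenvalues $0<\lambda_1\le\cdots\le\lambda_d$. Let $\Gamma\in\mathbb R^{d\times d}$ be a symmetric positive semi-definite matrix (the covariance matrix $\mathbb E[g(X_1,\theta^* )g(X_1,\theta^* )^\top]$ of the stochastic gradient at $\theta^*$), and let $\delta>1/\lambda_1$. Define $$\Sigma=\delta\int_0^\infty e^{t/\delta}e^{-t\nabla^2\Phi(\theta^* )}\Gamma e^{-t\nabla^2\Phi(\theta^* )}\,dt,\qquad \Delta=\nabla^2\Phi(\theta^* )^{-1}\Gamma\,\nabla^2\Phi(\theta^* )^{-1}.$$ Then $\Sigma-\Delta$ is positive semi-definite and $$\|\Sigma-\Delta\|_{\mathrm{op}}\le\frac{(\delta\lambda_d-1)^2}{2\delta\lambda_d-1}\|\Delta\|_{\mathrm{op}}.$$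
   Context: $\|M\|_{\mathrm{op}}$ is the operator norm of a symmetric matrix $M$, i.e. its largest eigenvalue in absolute value. *)

From HB Require Import structures.
From mathcomp Require Import all_boot all_order all_algebra.
From mathcomp Require Import all_classical all_reals all_analysis.
Set Implicit Arguments. Unset Strict Implicit. Unset Printing Implicit Defensive.
Import Order.TTheory GRing.Theory Num.Theory.
Local Open Scope ring_scope.
Local Open Scope classical_set_scope.

Definition expm (R : realType) (d : nat) (A : 'M[R]_d) : 'M[R]_d :=
  \matrix_(i, j) limn (fun n : nat => ((\sum_(k < n) (k`!%:R)^-1 *: A ^+ k) i j : R^o)).

Definition symmetric (R : realType) (d : nat) (M : 'M[R]_d) : Prop := M^T = M.

Definition posdef (R : realType) (d : nat) (M : 'M[R]_d) : Prop :=
  symmetric M /\ forall x : 'rV[R]_d, x != 0 -> 0 < (x *m M *m x^T) 0 0.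

Definition psd (R : realType) (d : nat) (M : 'M[R]_d) : Prop :=
  symmetric M /\ forall x : 'rV[R]_d, 0 <= (x *m M *m x^T) 0 0.

(* Operator norm of a symmetric matrix: largest eigenvalue in absolute value. *)
Definition opnorm (R : realType) (d : nat) (M : 'M[R]_d) : R :=
  sup [set `|a| | a in [set a : R | eigenvalue M a]].

Definition SigmaM (R : realType) (d : nat) (delta : R) (H Gamma : 'M[R]_d) : 'M[R]_d :=
  \matrix_(i, j) (delta * Rintegral (@lebesgue_measure R) `[0%R, +oo[%classic
     (fun t : R => expR (t / delta) *
        (expm (- (t *: H)) *m Gamma *m expm (- (t *: H))) i j)).

Definition DeltaM (R : realType) (d : nat) (H Gamma : 'M[R]_d) : 'M[R]_d :=
  invmx H *m Gamma *m invmx H.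

From Pilot Require Import Defs.
From HB Require Import structures.
From mathcomp Require Import all_boot all_order all_algebra.
From mathcomp Require Import all_classical all_reals all_analysis.
From mathcomp Require Import complex ring lra.
Import Order.TTheory GRing.Theory Num.Theory.
Import numFieldNormedType.Exports.
Local Open Scope ring_scope.
Set Implicit Arguments. Unset Strict Implicit. Unset Printing Implicit Defensive.

(* Diagonalize H = Q^T diag(L) Q with Q orthogonal (the real spectral theorem, obtained
   from the complex one by Householder deflation). In this eigenbasis, with
   G = Q Γ Q^T, the integral defining Σ is computed entrywise from exponential densities:
     Σ_lm = delta G_lm / (L_l + L_m - 1/delta),    Δ_lm = G_lm / (L_l L_m).
   For the diagonal matrices A = delta L - 1/2 and C = delta L - 1 this yields the
   Lyapunov identity A X + X A = C Δ C for X = Σ - Δ. A symmetric X such that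
   A X + X A is psd, with A positive definite, is itself psd (test on an eigenvector of X),
   so X >= 0. With rho = ||Δ|| and K = (delta lambda_d - 1)^2 / (2 delta lambda_d - 1),
   C Δ C <= rho C^2 <= 2 K rho A, since (u - 1)^2 / (2u - 1) increases for u >= 1;
   hence A (K rho - X) + (K rho - X) A >= 0, so X <= K rho and the eigenvalues of X
   lie in [0, K rho]. *)

Section Eigenvalues.
Variable F : fieldType.

Lemma qform_eigenvector n (A : 'M[F]_n) (v : 'rV[F]_n) a : v *m A = a *: v ->
  (v *m A *m v^T) 0 0 = a * (v *m v^T) 0 0.
Proof. by move=> vA; rewrite vA -scalemxAl mxE. Qed.

Lemma eigenvalue_conj n (P A : 'M[F]_n) a : P \in unitmx ->
  eigenvalue (invmx P *m A *m P) a = eigenvalue A a.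
Proof.
move=> Pu; apply/eigenvalueP/eigenvalueP => [[v vE v0]|[v vE v0]].
  exists (v *m invmx P); last by rewrite mulmx_free_eq0 ?row_free_unit ?unitmx_inv.
  by have := congr1 (mulmx^~ (invmx P)) vE; rewrite /= !mulmxA mulmxK // -scalemxAl.
exists (v *m P); last by rewrite mulmx_free_eq0 ?row_free_unit.
by rewrite !mulmxA mulmxK // vE scalemxAl.
Qed.

Lemma eigenvalue_diag n (D : 'rV[F]_n) l : eigenvalue (diag_mx D) (D 0 l).
Proof.
apply/eigenvalueP; exists (delta_mx 0 l).
  apply/rowP => j; rewrite mul_mx_diag !mxE eqxx mulrC.
  by case: eqP => [->|_]; rewrite ?mulr0.
apply/eqP => /rowP /(_ l); rewrite !mxE !eqxx /= => /eqP.
by rewrite oner_eq0.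
Qed.

Lemma eigenvalue_diagP n (D : 'rV[F]_n) a : eigenvalue (diag_mx D) a -> exists l, a = D 0 l.
Proof.
move=> /eigenvalueP [v vE /rV0Pn [l vl]]; exists l.
move/rowP: vE => /(_ l) /eqP; rewrite mul_mx_diag !mxE mulrC -subr_eq0 -mulrBl.
by rewrite mulf_eq0 (negbTE vl) orbF subr_eq0 => /eqP.
Qed.

Lemma orthomx_unit n (Q : 'M[F]_n) : Q *m Q^T = 1%:M -> Q \in unitmx.
Proof. by case/mulmx1_unit. Qed.

Lemma invmx_orthomx n (Q : 'M[F]_n) : Q *m Q^T = 1%:M -> invmx Q = Q^T.
Proof.
by move=> QQT; rewrite -[invmx Q]mulmx1 -QQT mulmxA mulVmx ?mul1mx // orthomx_unit.
Qed.

Lemma eigenvalue_orthoconj n (Q A : 'M[F]_n) a : Q *m Q^T = 1%:M ->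
  eigenvalue (Q^T *m A *m Q) a = eigenvalue A a.
Proof. by move=> QQT; rewrite -invmx_orthomx // eigenvalue_conj // orthomx_unit. Qed.

End Eigenvalues.

Section ConjugateDiagonal.
Variable R : comNzRingType.

Lemma conj_diag_mxE m n (P : 'M[R]_(m, n)) (D : 'rV[R]_m) i j :
  (P^T *m diag_mx D *m P) i j = \sum_l P l i * D 0 l * P l j.
Proof. by rewrite mxE; apply: eq_bigr => l _; rewrite mul_mx_diag !mxE. Qed.

Lemma diag_mx_exprn n (D : 'rV[R]_n) k : diag_mx D ^+ k = diag_mx (\row_l D 0 l ^+ k).
Proof.
elim: k => [|k IHk].
  by apply/matrixP => i j; rewrite !mxE expr0.
by rewrite exprS IHk -mulmxE mulmx_diag; congr diag_mx; apply/rowP => l; rewrite !mxE exprS.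
Qed.

Lemma exprn_orthoconj n (Q A : 'M[R]_n) k : Q *m Q^T = 1%:M ->
  (Q^T *m A *m Q) ^+ k = Q^T *m A ^+ k *m Q.
Proof.
move=> QQT; elim: k => [|k IHk]; first by rewrite !expr0 mulmx1 (mulmx1C QQT).
rewrite exprS IHk exprS -!mulmxE !mulmxA -(mulmxA _ Q) QQT mulmx1.
by rewrite -(mulmxA _ A (A ^+ k)).
Qed.

Lemma conj_mxE m n (P : 'M[R]_(m, n)) (A : 'M[R]_m) i j :
  (P^T *m A *m P) i j = \sum_l \sum_k P l i * A l k * P k j.
Proof.
rewrite mxE exchange_big /=; apply: eq_bigr => l _; rewrite mxE mulr_suml.
by apply: eq_bigr => k _; rewrite !mxE.
Qed.

Lemma diag_mx_lyapunovE n (a : 'rV[R]_n) (X : 'M[R]_n) :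
  diag_mx a *m X + X *m diag_mx a = \matrix_(i, j) ((a 0 i + a 0 j) * X i j).
Proof.
apply/matrixP => i j; rewrite [LHS]mxE mul_diag_mx mul_mx_diag !mxE.
by rewrite mulrDl (mulrC (a 0 j)).
Qed.

End ConjugateDiagonal.

Section RowSqnorm.
Variable R : realDomainType.

Lemma sqnorm_rowE n (v : 'rV[R]_n) : (v *m v^T) 0 0 = \sum_j v 0 j ^+ 2.
Proof. by rewrite mxE; apply: eq_bigr => j _; rewrite mxE expr2. Qed.

Lemma sqnorm_row_ge0 n (v : 'rV[R]_n) : 0 <= (v *m v^T) 0 0.
Proof. by rewrite sqnorm_rowE sumr_ge0 // => j _; rewrite sqr_ge0. Qed.

Lemma sqnorm_row_eq0 n (v : 'rV[R]_n) : ((v *m v^T) 0 0 == 0) = (v == 0).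
Proof.
rewrite sqnorm_rowE; apply/eqP/eqP => [v0|->]; last first.
  by rewrite big1 // => j _; rewrite mxE expr0n.
apply/rowP => j; apply/eqP; rewrite mxE -sqrf_eq0; apply/eqP.
exact: (psumr_eq0P (fun i _ => sqr_ge0 (v 0 i)) v0).
Qed.

Lemma sqnorm_row_gt0 n (v : 'rV[R]_n) : v != 0 -> 0 < (v *m v^T) 0 0.
Proof. by move=> v0; rewrite lt_def sqnorm_row_eq0 v0 sqnorm_row_ge0. Qed.

End RowSqnorm.

Section OrthogonalCompletion.
Variable R : realFieldType.

(* For w = 0 the junk value 2 / 0 = 0 makes Q the identity. *)
Lemma householder_orthogonal n (w : 'rV[R]_n) (s := (w *m w^T) 0 0) :
  let Q := 1%:M - (2 / s) *: (w^T *m w) in Q *m Q^T = 1%:M.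
Proof.
move=> Q; have [s0|s_neq0] := eqVneq s 0.
  by rewrite /Q s0 invr0 mulr0 scale0r subr0 trmx1 mulmx1.
have wwT : w *m w^T = s%:M by rewrite [LHS]mx11_scalar.
have QT : Q^T = Q by rewrite /Q linearB /= trmx1 linearZ /= trmx_mul trmxK.
rewrite QT /Q mulmxBl mul1mx mulmxBr mulmx1 -!scalemxAl -!scalemxAr scalerA.
rewrite mulmxA -(mulmxA w^T) wwT mul_mx_scalar -scalemxAl scalerA.
have -> : 2 / s * (2 / s) * s = 2 / s + 2 / s by field.
by rewrite scalerDl opprB addrK subrK.
Qed.

(* The Householder reflection along u - e_0 exchanges e_0 and u. *)
Lemma orthomx_with_row0 n (u : 'rV[R]_n.+1) : (u *m u^T) 0 0 = 1 ->
  exists Q : 'M[R]_n.+1, Q *m Q^T = 1%:M /\ row 0 Q = u.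
Proof.
move=> u1; pose w := u - delta_mx 0 0.
exists (1%:M - (2 / (w *m w^T) 0 0) *: (w^T *m w)).
split; first exact: householder_orthogonal.
have [w0|w_neq0] := eqVneq w 0.
  rewrite w0 mulmx0 scaler0 subr0 row1.
  by apply/eqP; rewrite eq_sym -subr_eq0 -/w w0.
have s_u00 : (w *m w^T) 0 0 = 2 - 2 * u 0 0.
  move: u1; rewrite !sqnorm_rowE (bigD1 0) //= => u1.
  rewrite (bigD1 0) //= !mxE eqxx /=.
  under eq_bigr => j /negbTE j0 do rewrite !mxE j0 subr0.
  have -> : \sum_(j < n.+1 | j != 0) u 0 j ^+ 2 = 1 - u 0 0 ^+ 2 by rewrite -u1 addrC addrK.
  ring.
have s_neq0 : 2 - 2 * u 0 0 != 0 by rewrite -s_u00 sqnorm_row_eq0.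
apply/rowP => j; rewrite s_u00 !mxE big_ord1 !mxE eqxx /=.
rewrite eq_sym mulrA.
have -> : 2 / (2 - 2 * u 0 0) * (u 0 0 - 1) = -1 by field.
by rewrite mulN1r opprK addrC subrK.
Qed.

Lemma orthoconj_eigen_block n (S Q : 'M[R]_(1 + n)) a :
  S^T = S -> Q *m Q^T = 1%:M -> row 0 Q *m S = a *: row 0 Q ->
  Q *m S *m Q^T = block_mx a%:M 0 0 (drsubmx (Q *m S *m Q^T)).
Proof.
set T := Q *m S *m Q^T => Ssym QQT eig.
have Tsym : T^T = T by rewrite /T !trmx_mul trmxK Ssym mulmxA.
have T0 j : T 0 j = a * (0 == j)%:R.
  have /rowP /(_ j) := congr1 (mulmx^~ Q^T) eig.
  by rewrite -!row_mul -scalemxAl -row_mul QQT !mxE.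
clearbody T.
have l0 : lshift n (0 : 'I_1) = 0 by apply/val_inj.
have Tur : ursubmx T = 0.
  by apply/matrixP => i j; rewrite ord1 !mxE l0 T0 mulr0n mulr0.
have Tdl : dlsubmx T = 0 by rewrite -[T]Tsym -trmx_ursub Tur trmx0.
have Tul : ulsubmx T = a%:M.
  by apply/matrixP => i j; rewrite !ord1 !mxE l0 T0 eqxx !mulr1n mulr1.
by rewrite -{1}[T]submxK Tur Tdl Tul.
Qed.

End OrthogonalCompletion.

Section RealSpectral.
Variable R : rcfType.

(* S is Hermitian over R[i], and the spectral decomposition of a Hermitian matrix has a
   real diagonal. *)
Lemma symmetric_eigenvalue_exists n (S : 'M[R]_n.+1) : S^T = S ->
  exists a, eigenvalue S a.
Proof.
move=> Ssym; pose f := real_complex R; pose Sc := map_mx f S.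
have Sc_herm : Sc \is hermsymmx.
  apply: realsym_hermsym.
    apply/is_hermitianmxP; rewrite expr0 scale1r.
    by apply/matrixP => i j; rewrite !mxE -{1}Ssym mxE.
  by apply/mxOverP => i j; rewrite mxE; apply/complex_realP; exists (S i j).
have /orthomx_spectralP Sc_diag := hermitian_normalmx Sc_herm.
have /mxOverP /(_ 0 0) /complex_realP [k Ek] := hermitian_spectral_diag_real Sc_herm.
exists k; rewrite -(eigenvalue_map f) -/Sc Sc_diag eigenvalue_conj ?spectral_unit //.
by rewrite /f /= -Ek eigenvalue_diag.
Qed.

Lemma symmetric_unit_eigenvector n (S : 'M[R]_n.+1) : S^T = S ->
  exists a (u : 'rV[R]_n.+1), (u *m u^T) 0 0 = 1 /\ u *m S = a *: u.
Proof.
move=> /symmetric_eigenvalue_exists [a /eigenvalueP [v vS v_neq0]].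
exists a, ((Num.sqrt ((v *m v^T) 0 0))^-1 *: v); split.
  rewrite linearZ /= -scalemxAl -scalemxAr scalerA [LHS]mxE -expr2 exprVn.
  by rewrite sqr_sqrtr ?sqnorm_row_ge0 // mulVf // sqnorm_row_eq0.
by rewrite -scalemxAl vS scalerA mulrC -scalerA.
Qed.

Lemma real_spectral n (S : 'M[R]_n) : S^T = S ->
  exists (P : 'M[R]_n) (D : 'rV[R]_n), P *m P^T = 1%:M /\ S = P^T *m diag_mx D *m P.
Proof.
elim: n S => [|n IH] S Ssym.
  by exists 1%:M, 0; split; [rewrite trmx1 mulmx1 | apply/matrixP => -[]].
move: S Ssym; rewrite -[n.+1]/(1 + n) => S Ssym.
have [a [u [u1 uS]]] := symmetric_unit_eigenvector Ssym.
have [Q [QQT Q0]] := orthomx_with_row0 u1.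
have Q0S : row 0 Q *m S = a *: row 0 Q by rewrite Q0.
have := orthoconj_eigen_block Ssym QQT Q0S; set S' := drsubmx _ => QSQ.
have S'sym : S'^T = S'.
  by rewrite /S' trmx_drsub !trmx_mul trmxK Ssym mulmxA.
have [P' [D' [P'P'T S'E]]] := IH S' S'sym.
pose B : 'M[R]_(1 + n) := block_mx 1%:M 0 0 P'.
have BBT : B *m B^T = 1%:M.
  rewrite tr_block_mx mulmx_block !trmx0 trmx1 !mulmx0 !mul0mx !mulmx1 !addr0 !add0r.
  by rewrite P'P'T -scalar_mx_block.
exists (B *m Q), (row_mx (a%:M : 'rV[R]_1) D'); split.
  by rewrite trmx_mul mulmxA -(mulmxA B) QQT mulmx1 BBT.
have QTQ := mulmx1C QQT.
have -> : S = Q^T *m (Q *m S *m Q^T) *m Q by rewrite !mulmxA QTQ mul1mx -mulmxA QTQ mulmx1.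
rewrite QSQ S'E (diag_mx_row (a%:M : 'rV_1) D') trmx_mul !mulmxA.
congr (_ *m _); rewrite -!mulmxA; congr (_ *m _).
rewrite /B tr_block_mx !trmx0 trmx1 !mulmx_block !mulmx0 !mul0mx !mulmx1 !mul1mx.
rewrite !addr0 !add0r !mulmxA mulmx0.
by rewrite (_ : diag_mx _ = a%:M) //; apply/matrixP => i j; rewrite !ord1 !mxE.
Qed.

End RealSpectral.

Local Open Scope classical_set_scope.

Section Psd.
Variable R : realType.

Lemma psd_eigenvalue_ge0 n (A : 'M[R]_n) a : psd A -> eigenvalue A a -> 0 <= a.
Proof.
move=> [_ Apsd] /eigenvalueP [v vA v_neq0].
by have := Apsd v; rewrite (qform_eigenvector vA) pmulr_lge0 // sqnorm_row_gt0.
Qed.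

Lemma posdef_eigenvalue_gt0 n (A : 'M[R]_n) a : posdef A -> eigenvalue A a -> 0 < a.
Proof.
move=> [_ Apd] /eigenvalueP [v vA v_neq0].
by have := Apd v v_neq0; rewrite (qform_eigenvector vA) pmulr_lgt0 // sqnorm_row_gt0.
Qed.

Lemma eigenvalue_le_of_psd n (A : 'M[R]_n) r a : psd (r%:M - A) -> eigenvalue A a -> a <= r.
Proof.
move=> [_ rApsd] /eigenvalueP [v vA v_neq0].
have := rApsd v; rewrite mulmxBr mul_mx_scalar vA -scalerBl -scalemxAl mxE.
by rewrite pmulr_lge0 ?sqnorm_row_gt0 // subr_ge0.
Qed.

Lemma psdD n (A B : 'M[R]_n) : psd A -> psd B -> psd (A + B).
Proof.
move=> [Asym Apsd] [Bsym Bpsd]; split; first by rewrite /Defs.symmetric linearD /= Asym Bsym.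
by move=> x; rewrite mulmxDr mulmxDl mxE addr_ge0.
Qed.

Lemma psd_conj m n (P : 'M[R]_(m, n)) (A : 'M[R]_m) : psd A -> psd (P^T *m A *m P).
Proof.
move=> [Asym Apsd]; split; first by rewrite /Defs.symmetric !trmx_mul trmxK Asym mulmxA.
by move=> x; have := Apsd (x *m P^T); rewrite trmx_mul trmxK !mulmxA.
Qed.

Lemma qform_diag n (D : 'rV[R]_n) (x : 'rV[R]_n) :
  (x *m diag_mx D *m x^T) 0 0 = \sum_i D 0 i * x 0 i ^+ 2.
Proof. by rewrite mul_mx_diag mxE; apply: eq_bigr => i _; rewrite !mxE mulrAC mulrC expr2. Qed.

Lemma psd_diag n (D : 'rV[R]_n) : (forall i, 0 <= D 0 i) -> psd (diag_mx D).
Proof.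
move=> D_ge0; split=> [|x]; first exact: tr_diag_mx.
by rewrite qform_diag sumr_ge0 // => i _; rewrite mulr_ge0 ?sqr_ge0.
Qed.

Lemma posdef_diag n (D : 'rV[R]_n) : (forall i, 0 < D 0 i) -> posdef (diag_mx D).
Proof.
move=> D_gt0; split=> [|x x_neq0]; first exact: tr_diag_mx.
have /rV0Pn [l xl] := x_neq0.
rewrite qform_diag (bigD1 l) //=; apply: ltr_pwDl; first by rewrite mulr_gt0 ?exprn_even_gt0.
by rewrite sumr_ge0 // => i _; rewrite mulr_ge0 ?sqr_ge0 ?ltW.
Qed.

Lemma psd_of_eigenvalues_ge0 n (S : 'M[R]_n) : S^T = S ->
  (forall a, eigenvalue S a -> 0 <= a) -> psd S.
Proof.
move=> /real_spectral [P [D [PPT ->]]] eig_ge0; apply/psd_conj/psd_diag => i.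
by apply: eig_ge0; rewrite eigenvalue_orthoconj // eigenvalue_diag.
Qed.

(* If p X = mu p then p (A X + X A) p^T = 2 mu (p A p^T). *)
Lemma psd_lyapunov n (A X : 'M[R]_n) : posdef A -> X^T = X ->
  psd (A *m X + X *m A) -> psd X.
Proof.
move=> [Asym Apd] Xsym [_ AXpsd]; apply: psd_of_eigenvalues_ge0 => // mu.
move=> /eigenvalueP [p pX p_neq0].
have XpT : X *m p^T = mu *: p^T by rewrite -{1}Xsym -trmx_mul pX linearZ.
have := AXpsd p; rewrite mulmxDr mulmxDl !mulmxA -(mulmxA (p *m A)) XpT pX.
rewrite -scalemxAr -!scalemxAl -scalerDr mxE pmulr_lge0 // mxE.
by apply: addr_gt0; apply: Apd.
Qed.

End Psd.

Section Opnorm.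
Variable R : realType.

Lemma opnorm_orthoconj n (Q S : 'M[R]_n) : Q *m Q^T = 1%:M ->
  opnorm (Q^T *m S *m Q) = opnorm S.
Proof.
move=> QQT; rewrite /opnorm; congr (sup [set `|a| | a in _]).
by apply/funext => a /=; rewrite eigenvalue_orthoconj.
Qed.

(* [0 <= r] covers the case without eigenvalues, where the sup of the empty set is 0. *)
Lemma opnorm_le n (S : 'M[R]_n) r : 0 <= r ->
  (forall a, eigenvalue S a -> `|a| <= r) -> opnorm S <= r.
Proof.
move=> r_ge0 eig_le; rewrite /opnorm.
have [ne|/nonemptyPn ->] := pselect ([set `|a| | a in [set a | eigenvalue S a]] !=set0).
  by apply: ge_sup => // _ [b Sb <-]; exact: eig_le.
by rewrite sup0.
Qed.

Section Symmetric.
Variables (n : nat) (S : 'M[R]_n).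
Hypothesis Ssym : S^T = S.

Lemma eigenvalue_le_opnorm a : eigenvalue S a -> `|a| <= opnorm S.
Proof.
move=> Sa; have [P [D [PPT SE]]] := real_spectral Ssym.
apply: ub_le_sup; last by exists a.
exists (\sum_l `|D 0 l|) => _ [b + <-].
rewrite /= SE eigenvalue_orthoconj // => /eigenvalue_diagP [l ->].
by rewrite (bigD1 l) //= lerDl sumr_ge0.
Qed.

Lemma opnorm_ge0 : 0 <= opnorm S.
Proof.
have [[a Sa]|no_eig] := pselect (exists a, eigenvalue S a).
  exact: le_trans (normr_ge0 a) (eigenvalue_le_opnorm Sa).
rewrite /opnorm (_ : [set `|a| | a in _] = set0) ?sup0 //.
by apply/nonemptyPn => -[_ [a Sa _]]; apply: no_eig; exists a.
Qed.

Lemma psd_opnorm_sub : psd ((opnorm S)%:M - S).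
Proof.
have [P [D [PPT SE]]] := real_spectral Ssym.
have -> : (opnorm S)%:M - S = P^T *m diag_mx (const_mx (opnorm S) - D) *m P.
  rewrite linearB /= diag_const_mx mulmxBr mulmxBl mul_mx_scalar -scalemxAl.
  by rewrite (mulmx1C PPT) -SE scalemx1.
apply: psd_conj; apply: psd_diag => l; rewrite !mxE subr_ge0.
apply: le_trans (ler_norm _) (eigenvalue_le_opnorm _).
by rewrite SE eigenvalue_orthoconj // eigenvalue_diag.
Qed.

End Symmetric.
End Opnorm.

Section RintegralSum.
Context d (T : measurableType d) (R : realType) (mu : {measure set T -> \bar R}).
Variables (D : set T) (I : Type) (f : I -> T -> R).
Hypotheses (mD : measurable D) (intf : forall i, mu.-integrable D (EFin \o f i)).

Lemma integrable_sum_EFin (s : seq I) :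
  mu.-integrable D (EFin \o (fun x => \sum_(i <- s) f i x)).
Proof.
apply: (eq_integrable mD _ _ _ (integrable_sum mD s (P := xpredT) (fun i _ => intf i))).
by move=> x _; rewrite /= sumEFin.
Qed.

Lemma Rintegral_sum (s : seq I) :
  Rintegral mu D (fun x => \sum_(i <- s) f i x) = \sum_(i <- s) Rintegral mu D (f i).
Proof.
elim: s => [|i s IHs].
  by under eq_fun do rewrite big_nil; rewrite Rintegral_cst // mul0r big_nil.
under eq_fun do rewrite big_cons.
by rewrite RintegralD // ?integrable_sum_EFin // IHs big_cons.
Qed.

End RintegralSum.

Section ExponentialIntegral.
Variable R : realType.
Notation mu := (@lebesgue_measure R).
Let D : set R := `[0%R, +oo[.
Let mD : measurable D. Proof. exact: measurable_itv. Qed.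

Lemma integrable_exponential_density (b : R) : 0 < b ->
  mu.-integrable D (EFin \o (fun t => b * expR (- b * t))).
Proof.
move=> b_gt0; apply/(@integrable_mkcond _ _ _ mu D _ mD); rewrite restrict_EFin.
exact: integrable_exponential_pdf.
Qed.

Lemma integrable_expR_Nmul (c b : R) : 0 < b ->
  mu.-integrable D (EFin \o (fun t => c * expR (- (b * t)))).
Proof.
move=> b_gt0.
pose f := fun t : R => b * expR (- b * t).
apply: (@eq_integrable _ _ _ mu D mD (fun t => ((c / b)%:E * (EFin \o f) t)%E)).
  by move=> t _; rewrite /= -EFinM mulrA divfK ?gt_eqF // mulNr.
exact/integrableZl/integrable_exponential_density.
Qed.

Lemma Rintegral_expR_Nmul (c b : R) : 0 < b ->
  Rintegral mu D (fun t => c * expR (- (b * t))) = c / b.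
Proof.
move=> b_gt0.
have density1 : Rintegral mu D (fun t => b * expR (- b * t)) = 1.
  by rewrite Rintegral_mkcond /Rintegral integral_exponential_pdf.
rewrite -[RHS]mulr1 -density1 -RintegralZl //; last exact: integrable_exponential_density.
by apply: eq_Rintegral => t _; rewrite mulrA divfK ?gt_eqF // mulNr.
Qed.

End ExponentialIntegral.

Section MatrixExponential.
Variable R : realType.

Lemma expm_orthoconj_diag n (Q : 'M[R]_n) (D : 'rV[R]_n) : Q *m Q^T = 1%:M ->
  expm (Q^T *m diag_mx D *m Q) = Q^T *m diag_mx (\row_l expR (D 0 l)) *m Q.
Proof.
move=> QQT; apply/matrixP => i j; rewrite mxE conj_diag_mxE.
have partial_sumE N : (\sum_(k < N) (k`!%:R)^-1 *: (Q^T *m diag_mx D *m Q) ^+ k) i j =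
    \sum_l Q l i * series (exp_coeff (D 0 l)) N * Q l j.
  rewrite summxE.
  under eq_bigr do rewrite exprn_orthoconj // diag_mx_exprn mxE conj_diag_mxE mulr_sumr.
  rewrite exchange_big /=; apply: eq_bigr => l _.
  rewrite /series /= big_mkord mulr_sumr mulr_suml; apply: eq_bigr => k _.
  by rewrite !mxE /exp_coeff /=; ring.
under eq_fun do rewrite partial_sumE.
apply: cvg_lim => //; apply: cvg_big => [|l _]; first exact: add_continuous.
rewrite mxE; apply: cvgM; last exact: cvg_cst.
apply: cvgM; [exact: cvg_cst | exact: is_cvg_series_exp_coeff].
Qed.

End MatrixExponential.

Section Eigenbasis.
Variable R : realType.

(* SigmaM and DeltaM of H = diag_mx L in closed form, using
   delta * \int_0^oo exp (t / delta) exp (-(L_l + L_m) t) dt = delta / (L_l + L_m - 1/delta). *)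
Definition sigma_diag (delta : R) n (L : 'rV[R]_n) (G : 'M[R]_n) : 'M[R]_n :=
  \matrix_(l, m) (delta * G l m / (L 0 l + L 0 m - delta^-1)).

Definition delta_diag n (L : 'rV[R]_n) (G : 'M[R]_n) : 'M[R]_n :=
  \matrix_(l, m) (G l m / (L 0 l * L 0 m)).

Lemma delta_diagE n (L : 'rV[R]_n) (G : 'M[R]_n) (Linv := \row_l (L 0 l)^-1) :
  delta_diag L G = diag_mx Linv *m G *m diag_mx Linv.
Proof.
apply/matrixP => i j; rewrite mul_mx_diag mul_diag_mx !mxE invfM.
by rewrite mulrCA mulrA.
Qed.

Lemma DeltaM_orthoconj_diag n (Q : 'M[R]_n) (L : 'rV[R]_n) (G : 'M[R]_n) :
  Q *m Q^T = 1%:M -> (forall l, L 0 l != 0) ->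
  DeltaM (Q^T *m diag_mx L *m Q) G = Q^T *m delta_diag L (Q *m G *m Q^T) *m Q.
Proof.
move=> QQT L_neq0; set H := Q^T *m _ *m Q; set Hinv := Q^T *m diag_mx (\row_l (L 0 l)^-1) *m Q.
have HHinv : H *m Hinv = 1%:M.
  rewrite /H /Hinv !mulmxA -(mulmxA _ Q) QQT mulmx1 -(mulmxA _ (diag_mx L)) mulmx_diag.
  rewrite (_ : diag_mx _ = 1%:M) ?mulmx1 ?(mulmx1C QQT) //.
  by apply/matrixP => i j; rewrite !mxE divff.
have invH : invmx H = Hinv.
  have Hu : H \in unitmx by case/mulmx1_unit: HHinv.
  by rewrite -[invmx H]mulmx1 -HHinv mulmxA mulVmx // mul1mx.
by rewrite /DeltaM invH delta_diagE /Hinv !mulmxA.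
Qed.

Lemma SigmaM_integrand_orthoconj_diag (delta t : R) n (Q : 'M[R]_n) (L : 'rV[R]_n)
    (G : 'M[R]_n) i j : Q *m Q^T = 1%:M ->
  let E := expm (- (t *: (Q^T *m diag_mx L *m Q))) in
  expR (t / delta) * (E *m G *m E) i j =
  \sum_(p : 'I_n * 'I_n) Q p.1 i * (Q *m G *m Q^T) p.1 p.2 * Q p.2 j *
                         expR (- ((L 0 p.1 + L 0 p.2 - delta^-1) * t)).
Proof.
move=> QQT E; rewrite {}/E.
have -> : - (t *: (Q^T *m diag_mx L *m Q)) = Q^T *m diag_mx (- (t *: L)) *m Q.
  rewrite (_ : diag_mx (- (t *: L)) = - t *: diag_mx L).
    by rewrite -scalemxAr -scalemxAl scaleNr.
  by apply/matrixP => a a'; rewrite !mxE mulrnAr mulNr.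
rewrite expm_orthoconj_diag //; set D := diag_mx _.
have -> : Q^T *m D *m Q *m G *m (Q^T *m D *m Q) = Q^T *m (D *m (Q *m G *m Q^T) *m D) *m Q.
  by rewrite !mulmxA.
move: (Q *m G *m Q^T) => G'.
rewrite conj_mxE pair_big /= mulr_sumr; apply: eq_bigr => p _.
rewrite mul_mx_diag mul_diag_mx !mxE.
have -> : expR (- ((L 0 p.1 + L 0 p.2 - delta^-1) * t)) =
    expR (t / delta) * expR (- (t * L 0 p.1)) * expR (- (t * L 0 p.2)).
  by rewrite -!expRD; congr expR; ring.
ring.
Qed.

Lemma SigmaM_orthoconj_diag (delta : R) n (Q : 'M[R]_n) (L : 'rV[R]_n) (G : 'M[R]_n) :
  Q *m Q^T = 1%:M -> (forall l m, 0 < L 0 l + L 0 m - delta^-1) ->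
  SigmaM delta (Q^T *m diag_mx L *m Q) G = Q^T *m sigma_diag delta L (Q *m G *m Q^T) *m Q.
Proof.
move=> QQT rate_gt0; apply/matrixP => i j; rewrite /SigmaM mxE.
under eq_Rintegral => t _ do rewrite SigmaM_integrand_orthoconj_diag //.
rewrite Rintegral_sum; [|exact: measurable_itv|by move=> p; exact: integrable_expR_Nmul].
rewrite conj_mxE pair_big /= mulr_sumr; apply: eq_bigr => p _.
by rewrite Rintegral_expR_Nmul // [in RHS]mxE; ring.
Qed.

End Eigenbasis.

(* (u - 1)^2 / (2u - 1) is nondecreasing on [1, +oo[. *)
Lemma sqr_subr1_le_mul (R : realFieldType) (u v : R) : 1 <= u -> u <= v ->
  (u - 1) ^+ 2 <= (v - 1) ^+ 2 / (2 * v - 1) * (2 * u - 1).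
Proof.
move=> u_ge1 uv; have v_pos : 0 < 2 * v - 1 by lra.
rewrite mulrAC ler_pdivlMr // -subr_ge0.
have -> : (v - 1) ^+ 2 * (2 * u - 1) - (u - 1) ^+ 2 * (2 * v - 1) =
  (v - u) * (2 * (u - 1) * (v - 1) + (u - 1) + (v - 1)) by ring.
have : 0 <= (u - 1) * (v - 1) by apply: mulr_ge0; lra.
by move=> h; apply: mulr_ge0; lra.
Qed.

Section EigenbasisBounds.
Variables (R : realType) (n : nat) (delta lambda : R) (L : 'rV[R]_n) (G : 'M[R]_n).
Hypotheses (delta_gt0 : 0 < delta) (deltaL_gt1 : forall l, 1 < delta * L 0 l)
  (L_le : forall l, L 0 l <= lambda) (deltalambda_gt1 : 1 < delta * lambda) (G_psd : psd G).

Let Dl := delta_diag L G.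
Let X := sigma_diag delta L G - Dl.
Let a := \row_l (delta * L 0 l - 2^-1).
Let c := \row_l (delta * L 0 l - 1).

Let L_gt0 l : 0 < L 0 l.
Proof. by rewrite -(pmulr_rgt0 _ delta_gt0); apply: lt_trans (deltaL_gt1 l). Qed.

Let a_gt0 l : 0 < a 0 l.
Proof. by have := deltaL_gt1 l; rewrite mxE; lra. Qed.

Let Dl_psd : psd Dl.
Proof. by rewrite /Dl delta_diagE -{1}tr_diag_mx; exact: psd_conj. Qed.

Let X_sym : X^T = X.
Proof.
rewrite /X linearB /= Dl_psd.1; congr (_ - _).
by apply/matrixP => i j; rewrite !mxE -{1}G_psd.1 mxE (addrC (L 0 j)).
Qed.

(* With A = delta H - 1/2 and C = delta H - 1 one has A Σ + Σ A = delta^2 Γ and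
   A Δ + Δ A = delta^2 Γ - C Δ C. *)
Lemma lyapunov_sigma_diag_sub :
  diag_mx a *m X + X *m diag_mx a = diag_mx c *m Dl *m diag_mx c.
Proof.
rewrite diag_mx_lyapunovE; apply/matrixP => i j.
rewrite /Dl delta_diagE mul_mx_diag mul_diag_mx -delta_diagE !mxE.
have := L_gt0 i; have := L_gt0 j; have := deltaL_gt1 i; have := deltaL_gt1 j.
move=> hj hi Lj Li.
have b_neq0 : (L 0 i + L 0 j) * delta - 1 != 0 by apply/eqP; nra.
by field; rewrite b_neq0 !gt_eqF.
Qed.

Lemma psd_sigma_diag_sub : psd X.
Proof.
apply: psd_lyapunov (posdef_diag a_gt0) X_sym _.
by rewrite lyapunov_sigma_diag_sub -{1}(tr_diag_mx c); exact: psd_conj.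
Qed.

Lemma opnorm_sigma_diag_sub_le :
  opnorm X <= (delta * lambda - 1) ^+ 2 / (2 * delta * lambda - 1) * opnorm Dl.
Proof.
set K := _ / _; set rho := opnorm Dl.
have rho_ge0 : 0 <= rho := opnorm_ge0 Dl_psd.1.
have c_le l : c 0 l ^+ 2 <= 2 * K * a 0 l.
  have u_le : delta * L 0 l <= delta * lambda by rewrite ler_pM2l.
  have -> : 2 * K * a 0 l = K * (2 * (delta * L 0 l) - 1) by rewrite mxE; field.
  by rewrite mxE /K -(mulrA 2); exact: sqr_subr1_le_mul (ltW (deltaL_gt1 l)) u_le.
have K_ge0 : 0 <= K.
  rewrite /K -(mulrA 2) divr_ge0 ?sqr_ge0 //.
  by move: deltalambda_gt1; set v := delta * lambda; lra.
pose N := (K * rho)%:M - X.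
have N_lyapunov : diag_mx a *m N + N *m diag_mx a =
    diag_mx c *m (rho%:M - Dl) *m diag_mx c +
    diag_mx (\row_l (rho * (2 * K * a 0 l - c 0 l ^+ 2))).
  rewrite /N mulmxBr mulmxBl mul_mx_scalar mul_scalar_mx addrACA -opprD.
  rewrite lyapunov_sigma_diag_sub; apply/matrixP => i j.
  rewrite mul_mx_diag mul_diag_mx [RHS]mxE mul_mx_diag mul_diag_mx !mxE.
  by case: eqP => [->|_]; rewrite ?mulr1n ?mulr0n; ring.
have N_psd : psd N.
  apply: psd_lyapunov (posdef_diag a_gt0) _ _.
    by rewrite /N linearB /= tr_scalar_mx X_sym.
  rewrite N_lyapunov; apply: psdD.
    by rewrite -{1}tr_diag_mx; apply/psd_conj/psd_opnorm_sub; case: Dl_psd.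
  by apply: psd_diag => l; rewrite mxE mulr_ge0 // subr_ge0.
apply: opnorm_le => [|b Xb]; first exact: mulr_ge0.
rewrite ger0_norm; last exact: psd_eigenvalue_ge0 psd_sigma_diag_sub Xb.
exact: eigenvalue_le_of_psd N_psd Xb.
Qed.

End EigenbasisBounds.

Theorem proposition3 (R : realType) (d : nat) (H Gamma : 'M[R]_d)
    (lambda1 lambdad delta : R) :
  posdef H ->
  eigenvalue H lambda1 -> eigenvalue H lambdad ->
  (forall a : R, eigenvalue H a -> lambda1 <= a /\ a <= lambdad) ->
  psd Gamma ->
  1 / lambda1 < delta ->
  psd (SigmaM delta H Gamma - DeltaM H Gamma) /\
  opnorm (SigmaM delta H Gamma - DeltaM H Gamma)
    <= (delta * lambdad - 1) ^+ 2 / (2 * delta * lambdad - 1)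
       * opnorm (DeltaM H Gamma).
Proof.
move=> H_pd H_l1 H_ld H_bounds Gamma_psd delta_gt.
have [Q [L [QQT HE]]] := real_spectral H_pd.1.
have L_eig l : eigenvalue H (L 0 l) by rewrite HE eigenvalue_orthoconj // eigenvalue_diag.
have L_gt0 l : 0 < L 0 l := posdef_eigenvalue_gt0 H_pd (L_eig l).
have lambda1_gt0 := posdef_eigenvalue_gt0 H_pd H_l1.
have delta_gt0 : 0 < delta by apply: lt_trans delta_gt; rewrite divr_gt0.
have delta_eig_gt1 a : eigenvalue H a -> 1 < delta * a.
  move=> Ha; apply: (@lt_le_trans _ _ (delta * lambda1)); first by rewrite -ltr_pdivrMr.
  by rewrite ler_pM2l // (H_bounds _ Ha).1.
have deltaL_gt1 l : 1 < delta * L 0 l := delta_eig_gt1 _ (L_eig l).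
have rate_gt0 l m : 0 < L 0 l + L 0 m - delta^-1.
  have : delta^-1 < L 0 l by rewrite -(ltr_pM2l delta_gt0) mulfV ?gt_eqF.
  by have := L_gt0 m; lra.
rewrite HE SigmaM_orthoconj_diag // DeltaM_orthoconj_diag => [|//|l]; last by rewrite gt_eqF.
rewrite -mulmxBl -mulmxBr !opnorm_orthoconj //.
have G_psd : psd (Q *m Gamma *m Q^T) by rewrite -{1}[Q]trmxK; exact: psd_conj.
split; first by apply/psd_conj/psd_sigma_diag_sub.
apply: opnorm_sigma_diag_sub_le => // [l|]; first exact: (H_bounds _ (L_eig l)).2.
exact: delta_eig_gt1.
Qed.
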